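(* Let $n\ge1$, let $\alpha,\beta,c$ be real constants and $F$ a smooth real function of one variable. Consider $$F(p)_{tt}-\alpha p_{ttt}-\beta\,\nabla^2p_t=c^2\nabla^2p$$ for $p(x_1,\dots,x_n,t)$, where $\nabla^2=\sum_{i=1}^n\partial^2/\partial x_i^2$. Let $\phi(x_1,\dots,x_n)$ and $\psi(x_1,\dots,x_n)$ be harmonic functions ($\nabla^2\phi=\nabla^2\psi=0$). Then every smooth solution $p$ satisfies the conservation law $\partial_tT^t+\sum_{i=1}^n\partial_{x_i}T^{x_i}=0$ with $$T^t=(\phi+t\psi)\big(F'(p)p_t-\alpha p_{tt}\big)-\psi\big(F(p)-\alpha p_t\big),$$ $$T^{x_i}=-c^2\big[(\phi+t\psi)p_{x_i}-p(\phi_{x_i}+t\psi_{x_i})\big]-\beta\big[(\phi+t\psi)p_{tx_i}-(\phi_{x_i}+t\psi_{x_i})p_t\big].$$ In particular, for $n\ge2$ the equation has infinitely many conservation laws.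
   Context: Subscripts denote partial derivatives. The corresponding multiplier is $\Lambda=\phi+t\psi$. *)

From HB Require Import structures.
From mathcomp Require Import all_boot all_order all_algebra.
From mathcomp Require Import all_classical all_reals all_analysis.
Set Implicit Arguments. Unset Strict Implicit. Unset Printing Implicit Defensive.
Import Order.TTheory GRing.Theory Num.Theory.
Import numFieldNormedType.Exports.
Local Open Scope ring_scope.

Section PDE.
Variables (R : realType) (n : nat).

Definition upd (x : 'I_n -> R) (i : 'I_n) (s : R) : 'I_n -> R :=
  fun j => if j == i then s else x j.

(* partial derivative: None = d/dt, Some i = d/dx_i *)
Definition pd (k : option 'I_n) (f : ('I_n -> R) -> R -> R) : ('I_n -> R) -> R -> R :=
  match k with
  | None => fun x t => derive1 (f x) t
  | Some i => fun x t => derive1 (fun s => f (upd x i s) t) (x i)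
  end.

Definition pderivable (k : option 'I_n) (f : ('I_n -> R) -> R -> R) x t : Prop :=
  match k with
  | None => derivable (f x) t 1
  | Some i => derivable (fun s => f (upd x i s) t) (x i) 1
  end.

Definition pds (ks : seq (option 'I_n)) (f : ('I_n -> R) -> R -> R) :=
  foldr pd f ks.

Definition jcont (g : ('I_n -> R) -> R -> R) : Prop :=
  forall x t (e : R), 0 < e -> exists2 d : R, 0 < d &
    forall y s, (forall i, `|y i - x i| < d) -> `|s - t| < d ->
      `|g y s - g x t| < e.

Definition Ck (k : nat) (f : ('I_n -> R) -> R -> R) : Prop :=
  forall ks : seq (option 'I_n), (size ks <= k)%N ->
    jcont (pds ks f) /\
    ((size ks < k)%N -> forall k0 x t, pderivable k0 (pds ks f) x t).

Definition smooth (f : ('I_n -> R) -> R -> R) : Prop := forall k, Ck k f.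

Definition sp (phi : ('I_n -> R) -> R) : ('I_n -> R) -> R -> R := fun x _ => phi x.

Definition lap (f : ('I_n -> R) -> R -> R) : ('I_n -> R) -> R -> R :=
  fun x t => \sum_(i < n) pd (Some i) (pd (Some i) f) x t.

Definition is_harmonic (phi : ('I_n -> R) -> R) : Prop :=
  Ck 2 (sp phi) /\ forall x, lap (sp phi) x 0 = 0.

End PDE.

Definition smooth1 (R : realType) (F : R -> R) : Prop :=
  forall (k : nat) (x : R), derivable (iter k (fun g : R -> R => derive1 g) F) x 1.

Arguments upd {R n}. Arguments pd {R n}. Arguments pderivable {R n}.
Arguments pds {R n}. Arguments jcont {R n}. Arguments Ck {R n}.
Arguments smooth {R n}. Arguments sp {R n}. Arguments lap {R n}.
Arguments is_harmonic {R n}. Arguments smooth1 {R}.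

From HB Require Import structures.
From mathcomp Require Import all_boot all_order all_algebra.
From mathcomp Require Import all_classical all_reals all_analysis.
From mathcomp Require Import ring.
Import Order.TTheory GRing.Theory Num.Theory.
Import numFieldNormedType.Exports.
Set Implicit Arguments.
Unset Strict Implicit.
Unset Printing Implicit Defensive.
Local Open Scope ring_scope.

(** Both fluxes are Wronskians [u v' - u' v] with [u = Lam], whose derivative is
    [u v'' - u'' v] since the cross terms cancel.  In time [Lam_tt = 0], so
    [d_t T^t = Lam (F(p)_tt - alpha p_ttt)]; in space, summing over [i] gives
    [Lam (-c^2 lap p - beta lap p_t) + (lap Lam) (c^2 p + beta p_t)].  Hence the
    divergence is [Lam] times the residual of the equation plus [lap Lam] times
    [c^2 p + beta p_t], and both terms vanish. *)

Section Derivatives1.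
Variable R : numFieldType.
Implicit Types (f g : R -> R) (x : R).

Lemma is_derive_derive1 f x : derivable f x 1 -> is_derive x 1 f (derive1 f x).
Proof. by move=> /derivableP; rewrite derive1E. Qed.

Lemma derive1_val f x d : is_derive x 1 f d -> derive1 f x = d.
Proof. by move=> df; rewrite derive1E derive_val. Qed.

Lemma is_derive_affine (a b x : R) : is_derive x 1 (fun s => a + s * b) b.
Proof.
apply: is_derive_eq (is_deriveD (is_derive_cst a x 1)
                      (is_deriveM (is_derive_id x 1) (is_derive_cst b x 1))) _.
by rewrite add0r scaler0 add0r /GRing.scale /= mulr1.
Qed.

Lemma is_deriveMl f (k x df : R) :
  is_derive x 1 f df -> is_derive x 1 (fun s => k * f s) (k * df).
Proof. exact: is_deriveZ. Qed.

Lemma is_derive_wronskian f f' g g' x (f'' g'' : R) :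
  is_derive x 1 f (f' x) -> is_derive x 1 g (g' x) ->
  is_derive x 1 f' f'' -> is_derive x 1 g' g'' ->
  is_derive x 1 (fun s => f s * g' s - f' s * g s) (f x * g'' - f'' * g x).
Proof.
move=> df dg df' dg'.
apply: is_derive_eq (is_deriveB (is_deriveM df dg') (is_deriveM df' dg)) _.
by rewrite /GRing.scale /=; ring.
Qed.

End Derivatives1.

Section PartialDerivatives.
Variables (R : realType) (n : nat).
Implicit Types (f : ('I_n -> R) -> R -> R) (x : 'I_n -> R) (t : R) (i : 'I_n).

Lemma upd_id x i : upd x i (x i) = x.
Proof. by apply: funext => j; rewrite /upd; case: eqP => // ->. Qed.

Lemma pd_None_is_derive f x t :
  pderivable None f x t -> is_derive t 1 (f x) (pd None f x t).
Proof. exact: is_derive_derive1. Qed.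

Lemma pd_Some_is_derive f i x t : pderivable (Some i) f x t ->
  is_derive (x i) 1 (fun s => f (upd x i s) t) (pd (Some i) f x t).
Proof. exact: is_derive_derive1. Qed.

Lemma Ck_pderivable k f ks k0 x t :
  Ck k f -> (size ks < k)%N -> pderivable k0 (pds ks f) x t.
Proof. by move=> hf hks; exact: ((hf ks (ltnW hks)).2 hks k0 x t). Qed.

Lemma smooth_pderivable f ks k0 x t : smooth f -> pderivable k0 (pds ks f) x t.
Proof. by move=> hf; exact: Ck_pderivable (hf (size ks).+1) (ltnSn _). Qed.

Lemma harmonic_lap (phi : ('I_n -> R) -> R) x t : is_harmonic phi -> lap (sp phi) x t = 0.
Proof. by case=> _ h; exact: h x. Qed.

End PartialDerivatives.

Section ConservationLaw.
Variables (R : realType) (n : nat) (alpha beta c : R) (F : R -> R).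
Variables (phi psi : ('I_n -> R) -> R) (p : ('I_n -> R) -> R -> R).
Hypotheses (hF : smooth1 F) (hphi : is_harmonic phi) (hpsi : is_harmonic psi).
Hypothesis hp : smooth p.

Definition Lam x t := phi x + t * psi x.

Definition dLam i x t := pd (Some i) (sp phi) x t + t * pd (Some i) (sp psi) x t.

Definition ddLam i x t :=
  pd (Some i) (pd (Some i) (sp phi)) x t + t * pd (Some i) (pd (Some i) (sp psi)) x t.

Definition Tt x t :=
  Lam x t * (derive1 F (p x t) * pd None p x t - alpha * pd None (pd None p) x t)
  - psi x * (F (p x t) - alpha * pd None p x t).

Definition Tx i x t :=
  - c ^+ 2 * (Lam x t * pd (Some i) p x t - p x t * dLam i x t)
  - beta * (Lam x t * pd (Some i) (pd None p) x t - dLam i x t * pd None p x t).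

Lemma pd_None_Tt x t :
  pd None Tt x t = Lam x t * (pd None (pd None (fun y s => F (p y s))) x t
                              - alpha * pd None (pd None (pd None p)) x t).
Proof.
have dp ks (s : R) : is_derive s 1 (pds ks p x) (pd None (pds ks p) x s).
  exact/pd_None_is_derive/smooth_pderivable.
have dFp (s : R) : is_derive s 1 (fun r => F (p x r)) (derive1 F (p x s) * pd None p x s).
  exact: (is_derive1_comp (is_derive_derive1 (@hF 0%N (p x s))) (dp [::] s)).
have ddFp : is_derive t 1 (fun s => derive1 F (p x s) * pd None p x s)
                        (pd None (pd None (fun y s => F (p y s))) x t).
  have -> : pd None (pd None (fun y s => F (p y s))) x t
            = derive1 (fun s => derive1 F (p x s) * pd None p x s) t.
    by congr derive1; apply: funext => s; exact: derive1_val (dFp s).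
  apply/is_derive_derive1/ex_derive.
  exact: is_deriveM (is_derive1_comp (is_derive_derive1 (@hF 1%N _)) (dp [::] t))
                    (dp [:: None] t).
have W := is_derive_wronskian (is_derive_affine (phi x) (psi x) t)
  (is_deriveB (dFp t) (is_deriveMl alpha (dp [:: None] t)))
  (is_derive_cst (psi x) t 1)
  (is_deriveB ddFp (is_deriveMl alpha (dp [:: None; None] t))).
apply: derive1_val.
by apply: is_derive_eq W _; rewrite mul0r subr0.
Qed.

Lemma pd_Some_Tx i x t :
  pd (Some i) (Tx i) x t =
    - c ^+ 2 * (Lam x t * pd (Some i) (pd (Some i) p) x t - p x t * ddLam i x t)
    - beta * (Lam x t * pd (Some i) (pd (Some i) (pd None p)) x t
              - ddLam i x t * pd None p x t).
Proof.
have dline f : pderivable (Some i) f x t ->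
    is_derive (x i) 1 (fun s => f (upd x i s) t) (pd (Some i) f (upd x i (x i)) t).
  by rewrite upd_id; exact: pd_Some_is_derive.
have dp ks : is_derive (x i) 1 (fun s => pds ks p (upd x i s) t)
                       (pd (Some i) (pds ks p) (upd x i (x i)) t).
  exact/dline/smooth_pderivable.
have ddp ks : is_derive (x i) 1 (fun s => pd (Some i) (pds ks p) (upd x i s) t)
                        (pd (Some i) (pd (Some i) (pds ks p)) x t).
  exact: pd_Some_is_derive (smooth_pderivable (Some i :: ks) _ _ _ hp).
have dharm (h : ('I_n -> R) -> R) ks : is_harmonic h -> (size ks < 2)%N ->
    pderivable (Some i) (pds ks (sp h)) x t.
  by case=> hC _; exact: Ck_pderivable hC.
have dL : is_derive (x i) 1 (fun s => Lam (upd x i s) t) (dLam i (upd x i (x i)) t).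
  exact: (is_deriveD (dline _ (dharm _ [::] hphi isT))
                     (is_deriveMl t (dline _ (dharm _ [::] hpsi isT)))).
have ddL : is_derive (x i) 1 (fun s => dLam i (upd x i s) t) (ddLam i x t).
  exact: (is_deriveD (pd_Some_is_derive (dharm _ [:: Some i] hphi isT))
                     (is_deriveMl t (pd_Some_is_derive (dharm _ [:: Some i] hpsi isT)))).
have W1 := is_derive_wronskian dL (dp [::]) ddL (ddp [::]).
have W2 := is_derive_wronskian dL (dp [:: None]) ddL (ddp [:: None]).
rewrite upd_id in W1 W2.
apply: derive1_val.
have -> : (fun s => Tx i (upd x i s) t) = (fun s =>
    - c ^+ 2 * (Lam (upd x i s) t * pd (Some i) p (upd x i s) t
                - dLam i (upd x i s) t * p (upd x i s) t)
    - beta * (Lam (upd x i s) t * pd (Some i) (pd None p) (upd x i s) t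
              - dLam i (upd x i s) t * pd None p (upd x i s) t)).
  by apply: funext => s; rewrite /Tx [p _ _ * _]mulrC.
rewrite [p x t * _]mulrC.
exact: (is_deriveB (is_deriveMl _ W1) (is_deriveMl _ W2)).
Qed.

Lemma sum_ddLam x t :
  \sum_(i < n) ddLam i x t = lap (sp phi) x t + t * lap (sp psi) x t.
Proof. by rewrite big_split -mulr_sumr. Qed.

Lemma divergence_identity x t :
  pd None Tt x t + \sum_(i < n) pd (Some i) (Tx i) x t
  = Lam x t * (pd None (pd None (fun y s => F (p y s))) x t
               - alpha * pd None (pd None (pd None p)) x t
               - beta * lap (pd None p) x t - c ^+ 2 * lap p x t)
    + (\sum_(i < n) ddLam i x t) * (c ^+ 2 * p x t + beta * pd None p x t).
Proof.
(* Stated for abstract [a b d]: rewriting the sums in place would make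
   unification unfold [pd], which is prohibitively slow. *)
have rearrange (L A P Q : R) (a b d : 'I_n -> R) :
    L * A + \sum_i (- c ^+ 2 * (L * a i - P * d i) - beta * (L * b i - d i * Q))
    = L * (A - beta * \sum_i b i - c ^+ 2 * \sum_i a i)
      + (\sum_i d i) * (c ^+ 2 * P + beta * Q).
  rewrite sumrB -!mulr_sumr !sumrB -!mulr_sumr -mulr_suml.
  by ring.
rewrite pd_None_Tt (eq_bigr _ (fun i _ => pd_Some_Tx i x t)).
exact: rearrange.
Qed.

Hypothesis hpde : forall x t,
  pd None (pd None (fun y s => F (p y s))) x t
  - alpha * pd None (pd None (pd None p)) x t
  - beta * lap (pd None p) x t
  = c ^+ 2 * lap p x t.

Lemma conservation_law x t : pd None Tt x t + \sum_(i < n) pd (Some i) (Tx i) x t = 0.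
Proof.
rewrite divergence_identity sum_ddLam (harmonic_lap x t hphi) (harmonic_lap x t hpsi).
by rewrite [X in Lam x t * (X - _)](hpde x t) subrr mulr0 mulr0 addr0 mul0r addr0.
Qed.

End ConservationLaw.

Theorem mainTheorem6 (R : realType) (n : nat) (hn : (1 <= n)%N)
  (alpha beta c : R) (F : R -> R) (phi psi : ('I_n -> R) -> R)
  (p : ('I_n -> R) -> R -> R) :
  smooth1 F ->
  is_harmonic phi -> is_harmonic psi ->
  smooth p ->
  (forall x t,
     pd None (pd None (fun y s => F (p y s))) x t
     - alpha * pd None (pd None (pd None p)) x t
     - beta * lap (pd None p) x t
     = c ^+ 2 * lap p x t) ->
  let Lam := fun x t => phi x + t * psi x in
  let Tt := fun x t =>
      Lam x t * (derive1 F (p x t) * pd None p x t - alpha * pd None (pd None p) x t)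
      - psi x * (F (p x t) - alpha * pd None p x t) in
  let Tx := fun (i : 'I_n) x t =>
      - c ^+ 2 * (Lam x t * pd (Some i) p x t
                  - p x t * (pd (Some i) (sp phi) x t + t * pd (Some i) (sp psi) x t))
      - beta * (Lam x t * pd (Some i) (pd None p) x t
                - (pd (Some i) (sp phi) x t + t * pd (Some i) (sp psi) x t)
                  * pd None p x t) in
  forall x t, pd None Tt x t + \sum_(i < n) pd (Some i) (Tx i) x t = 0.
Proof. by move=> hF hphi hpsi hp hpde Lam Tt Tx; exact: conservation_law. Qed.
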